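(* For all types $\tau_1,\tau_2,\tau_p$ with $\tau_p=\tau_1+\tau_2$, every heap $H$ and value $v$: $\mathrm{own}(H,v,\tau_p)=\mathrm{own}(H,v,\tau_1)+\mathrm{own}(H,v,\tau_2)$.
   Context: Types $\tau ::= \{\nu:\mathtt{int}\mid\varphi\}\mid\tau\ \mathtt{ref}^r$, with $\varphi$ a refinement formula and $r\in[0,1]$ rational. Type addition is the least commutative partial operation satisfying $\{\nu:\mathtt{int}\mid\varphi_1\}+\{\nu:\mathtt{int}\mid\varphi_2\}=\{\nu:\mathtt{int}\mid\varphi_1\wedge\varphi_2\}$ and $\tau_1\ \mathtt{ref}^{r_1}+\tau_2\ \mathtt{ref}^{r_2}=(\tau_1+\tau_2)\ \mathtt{ref}^{r_1+r_2}$. Values: integers or addresses; a heap $H$ is a finite partial map from addresses to values. Ownership maps are functions from addresses to nonnegative rationals, added pointwise; $\{a\mapsto r\}$ maps $a$ to $r$ and everything else to 0; $\emptyset$ is the zero map. $\mathrm{own}(H,v,\tau)=\{a\mapsto r\}+\mathrm{own}(H,H(a),\tau')$ if $v$ is an address $a\in dom(H)$ and $\tau=\tau'\ \mathtt{ref}^r$; otherwise $\mathrm{own}(H,v,\tau)=\emptyset$. *)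

From HB Require Import structures.
From mathcomp Require Import all_boot all_order all_algebra.
From mathcomp Require Import finmap.
Set Implicit Arguments. Unset Strict Implicit. Unset Printing Implicit Defensive.
Import Order.TTheory GRing.Theory Num.Theory.
Local Open Scope ring_scope.
Local Open Scope fmap_scope.

(* Refinement formulas are kept abstract: a type [F] with conjunction [fand]. *)
Section Types.
Variables (F : Type) (fand : F -> F -> F).

(* tau ::= {nu:int | phi} | tau ref^r *)
Inductive ty : Type :=
| TInt : F -> ty
| TRef : ty -> rat -> ty.

Fixpoint wf_ty (t : ty) : Prop :=
  match t with
  | TInt _ => True
  | TRef t' r => 0 <= r <= 1 /\ wf_ty t'
  end.

Fixpoint ty_add (t1 t2 : ty) : option ty :=
  match t1, t2 with
  | TInt p1, TInt p2 => Some (TInt (fand p1 p2))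
  | TRef u1 r1, TRef u2 r2 =>
      match ty_add u1 u2 with
      | Some u => Some (TRef u (r1 + r2))
      | None => None
      end
  | _, _ => None
  end.
End Types.

Definition addr := nat.

Inductive value : Type :=
| VInt : int -> value
| VAddr : addr -> value.

Definition heap := {fmap addr -> value}.

Definition omap := addr -> rat.
Definition omap0 : omap := fun _ => 0.
Definition omap_add (o1 o2 : omap) : omap := fun a => o1 a + o2 a.
Definition omap1 (a : addr) (r : rat) : omap := fun b => if b == a then r else 0.

Fixpoint own (F : Type) (H : heap) (v : value) (t : ty F) {struct t} : omap :=
  match v, t with
  | VAddr a, TRef t' r =>
      match H.[? a] with
      | Some w => omap_add (omap1 a r) (own H w t')
      | None => omap0
      end
  | _, _ => omap0
  end.

From Pilot Require Import Defs.
From mathcomp Require Import all_boot all_order all_algebra.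
From mathcomp Require Import finmap.
From Stdlib Require Import FunctionalExtensionality.
Import GRing.Theory.
Local Open Scope ring_scope.

(* Induction on the first summand, following the recursion of [ty_add]: at a
   reference the ownership of the cell splits as [r1 + r2] and the rest of the
   chain splits by the induction hypothesis on the pointee types. *)

Lemma omap_add0l (o : Defs.omap) : omap_add omap0 o = o.
Proof. by apply: functional_extensionality => a; rewrite /omap_add add0r. Qed.

Lemma omap1D (a : addr) (r1 r2 : rat) :
  omap1 a (r1 + r2) = omap_add (omap1 a r1) (omap1 a r2).
Proof.
by apply: functional_extensionality => b; rewrite /omap_add /omap1; case: (b == a); rewrite ?addr0.
Qed.

Lemma omap_addACA (o1 o2 o3 o4 : Defs.omap) :
  omap_add (omap_add o1 o2) (omap_add o3 o4) =
  omap_add (omap_add o1 o3) (omap_add o2 o4).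
Proof. by apply: functional_extensionality => a; rewrite /omap_add addrACA. Qed.

Lemma own_ty_add (F : Type) (fand : F -> F -> F) (t1 t2 tp : ty F) (H : heap) (v : value) :
  ty_add fand t1 t2 = Some tp -> own H v tp = omap_add (own H v t1) (own H v t2).
Proof.
elim: t1 t2 tp v => [p1|u1 IHu r1] [p2|u2 r2] tp v //=.
  by move=> [<-]; case: v => [z|a]; rewrite /= omap_add0l.
case Hu: (ty_add fand u1 u2) => [u|] // [<-].
case: v => [z|a] /=; first by rewrite omap_add0l.
case: (H.[? a])%fmap => [w|]; last by rewrite omap_add0l.
by rewrite (IHu _ _ w Hu) omap1D omap_addACA.
Qed.

Theorem lemma15 (F : Type) (fand : F -> F -> F) (t1 t2 tp : ty F)
  (wf1 : wf_ty t1) (wf2 : wf_ty t2) (wfp : wf_ty tp)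
  (Hadd : ty_add fand t1 t2 = Some tp) (H : heap) (v : value) :
  own H v tp = omap_add (own H v t1) (own H v t2).
Proof. exact: own_ty_add Hadd. Qed.
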